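(* Let $V$ be an $\mathcal{L}[\frac12]$-module on which $c$ acts as $0$, with a basis $\{x_k\mid k\in\frac12\mathbb{Z}\}$ and constants $a,b\in\mathbb{C}$, $f_{p,k},g_{n,k}\in\mathbb{C}$ such that for all $p\in\frac12+\mathbb{Z}$, $n\in\mathbb{Z}$, $k\in\frac12\mathbb{Z}$: $Y_px_k=f_{p,k}x_{k+p}$, $M_nx_k=g_{n,k}x_{k+n}$, $L_nx_k=(a+k+bn)x_{k+n}$ if $k\in\mathbb{Z}$ and $L_nx_k=(a+k+(b+\frac12)n)x_{k+n}$ if $k\in\frac12+\mathbb{Z}$. Then for all $k,j\in\mathbb{Z}$ and $n,p\in\frac12+\mathbb{Z}$, $$(a+k+2bn)f_{p,j}=(a+j+2bp)f_{n,k},$$ and there exists $f_0\in\mathbb{C}$ such that $f_{p,j}=(a+j+2bp)f_0$ for all $j\in\mathbb{Z}$, $p\in\frac12+\mathbb{Z}$.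
   Context: $\mathcal{L}[\frac12]$ is the complex Lie algebra with basis $\{L_m,Y_p,M_n,c\mid m,n\in\mathbb{Z},\ p\in\frac12+\mathbb{Z}\}$ and brackets $[L_m,L_{m'}]=(m'-m)L_{m+m'}+\delta_{m,-m'}\frac{m^3-m}{12}c$, $[L_m,Y_p]=(p-\frac m2)Y_{p+m}$, $[L_m,M_n]=nM_{n+m}$, $[Y_p,Y_{p'}]=(p'-p)M_{p+p'}$, $[Y_p,M_n]=[M_n,M_{n'}]=0$, $c$ central. *)

From HB Require Import structures.
From mathcomp Require Import all_boot all_order all_algebra.
Set Implicit Arguments. Unset Strict Implicit. Unset Printing Implicit Defensive.
Import Order.TTheory GRing.Theory Num.Theory.
Local Open Scope ring_scope.

(* Encoding conventions:
   - an element s of (1/2)Z is encoded by the integer t = 2s;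
   - an element p of 1/2 + Z is encoded by the integer q with p = q + 1/2
     (i.e. p = (2q+1)/2);
   - m, n in Z are encoded by themselves. *)

Definition hz {R : numFieldType} (q : int) : R := (2 * q + 1)%:~R / 2.
Definition halfv {R : numFieldType} (t : int) : R := t%:~R / 2.

Definition is_L12_module_c0 {R : numFieldType} {V : lmodType R}
  (L : int -> {linear V -> V}) (Y : int -> {linear V -> V})
  (M : int -> {linear V -> V}) : Prop :=
  [/\ (forall (m m' : int) (v : V),
          L m (L m' v) - L m' (L m v) = (m' - m)%:~R *: L (m + m') v),
      (forall (m q : int) (v : V),
          L m (Y q v) - Y q (L m v) = (hz q - m%:~R / 2) *: Y (q + m) v),
      (forall (m n : int) (v : V),
          L m (M n v) - M n (L m v) = n%:~R *: M (n + m) v),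
      (forall (q q' : int) (v : V),
          Y q (Y q' v) - Y q' (Y q v) = (hz q' - hz q) *: M (q + q' + 1) v) &
      ((forall (q n : int) (v : V), Y q (M n v) - M n (Y q v) = 0) /\ 
      (forall (n n' : int) (v : V), M n (M n' v) - M n' (M n v) = 0))].

(* x : int -> V, with x t standing for x_{t/2}, is a (Hamel) basis of V. *)
Definition is_basis {R : numFieldType} {V : lmodType R} (x : int -> V) : Prop :=
  (forall (s : seq int) (c : int -> R), uniq s ->
      \sum_(i <- s) c i *: x i = 0 -> forall i, i \in s -> c i = 0)
  /\ (forall v : V, exists (s : seq int) (c : int -> R),
      v = \sum_(i <- s) c i *: x i).

From HB Require Import structures.
From mathcomp Require Import all_boot all_order all_algebra.
From mathcomp Require Import ring zify.
From Stdlib Require Import Classical.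
Set Implicit Arguments. Unset Strict Implicit. Unset Printing Implicit Defensive.
Import Order.TTheory GRing.Theory Num.Theory.
Local Open Scope ring_scope.

(* Proof of Lemma 3.3.  Write F q j := f_{q+1/2, j} for the coefficient of
   Y_{q+1/2} on the integral basis vector x_j, and w q j := a + j + 2b(q+1/2)
   for the claimed weight.  Applying the bracket [L_m, Y_{q+1/2}] to x_j and
   reading off the coefficient of x_{j+q+m+1/2} yields a recurrence on F
   ([Y_recurrence] below), and both claims say that F = w * f0 for a constant
   f0.  The recurrence has the following consequences:
   - proportionality to w propagates from rows q0 to q0 + m whenever
     q0 + 1/2 - m/2 <> 0 ([weight_propagates]), so it suffices to treat row 0;
   - in rows 0 and -1 it degenerates into a first-order chain
     w (j+1) F j = w j F (j+1), whose solutions are proportional to w as soon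
     as w never vanishes along the row ([AffineChain]);
   - if w vanishes somewhere on both rows, then 2b is an integer t, and
     eliminating the rows -1 and -3 from six instances of the recurrence gives
     (3t^2 - t - 1)(F 0 (j0-1) + F 0 (j0+1)) = 0, where w 0 j0 = 0; since
     3t^2 - t - 1 has no integral root, this is the extra condition under
     which a chain through a zero of w is still proportional to w. *)

Lemma halfv_even (R : numFieldType) (j : int) : (halfv (2 * j) : R) = j%:~R.
Proof. by rewrite /halfv; field. Qed.

Lemma halfv_odd (R : numFieldType) (j q : int) :
  (halfv (2 * j + (2 * q + 1)) : R) = j%:~R + hz q.
Proof. by rewrite /halfv /hz; field. Qed.

Lemma basis_scale_eq0 (R : numFieldType) (V : lmodType R) (x : int -> V)
    (t : int) (k : R) :
  is_basis x -> k *: x t = 0 -> k = 0.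
Proof.
move=> [indep _] kx0.
apply: (indep [:: t] (fun _ => k) erefl _ t); last exact: mem_head.
by rewrite big_seq1.
Qed.

Lemma eq_by_multiple (R : pzRingType) (u v P Q k : R) :
  u = v -> P - Q = k * (u - v) -> P = Q.
Proof. by move=> -> /eqP; rewrite subrr mulr0 subr_eq0 => /eqP. Qed.

Lemma no_integral_root (t : int) : 3 * t * t - t - 1 != 0.
Proof.
apply/eqP; have [|[|]] : t <= -1 \/ t = 0 \/ 1 <= t by lia.
all: nia.
Qed.

Section AffineChain.
Variables (R : numFieldType) (W G : int -> R).
Hypothesis W_succ : forall j, W (j + 1) = W j + 1.
Hypothesis G_chain : forall j, W (j + 1) * G j = W j * G (j + 1).

Lemma W_shift k (n : nat) : W (k + n%:Z) = W k + n%:R.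
Proof.
elim: n => [|n IHn]; first by rewrite addr0 addr0.
by rewrite -addn1 PoszD addrA W_succ IHn natrD addrA.
Qed.

Lemma W_shiftN k (n : nat) : W (k - n%:Z) = W k - n%:R.
Proof. by have := W_shift (k - n%:Z) n; rewrite subrK => ->; rewrite addrK. Qed.

Lemma chain_up k c : G k = W k * c -> (forall n : nat, W (k + n%:Z) != 0) ->
  forall n : nat, G (k + n%:Z) = W (k + n%:Z) * c.
Proof.
move=> Gk W_nz; elim=> [|n IHn]; first by rewrite addr0.
have -> : k + n.+1%:Z = (k + n%:Z) + 1 by lia.
by apply: (mulfI (W_nz n)); rewrite -G_chain IHn mulrCA.
Qed.

Lemma chain_down k c : G k = W k * c -> (forall n : nat, W (k - n%:Z) != 0) ->
  forall n : nat, G (k - n%:Z) = W (k - n%:Z) * c.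
Proof.
move=> Gk W_nz; elim=> [|n IHn]; first by rewrite subr0.
have split_k : k - n%:Z = (k - n.+1%:Z) + 1 by lia.
apply: (mulfI (W_nz n)).
by have := G_chain (k - n.+1%:Z); rewrite -split_k => ->; rewrite IHn mulrCA.
Qed.

Lemma chain_nonvanishing : (forall j, W j != 0) -> exists c, forall j, G j = W j * c.
Proof.
move=> W_nz; exists (G 0 / W 0) => j.
have G0 : G 0 = W 0 * (G 0 / W 0) by rewrite mulrC divfK.
case: j => n.
- by have := chain_up G0 (fun _ => W_nz _) n; rewrite add0r.
- by rewrite NegzE; have := chain_down G0 (fun _ => W_nz _) n.+1; rewrite sub0r.
Qed.

(* If W vanishes at j0, the chain alone forces G j0 = 0 but leaves G on both
   sides of j0 independent; the extra condition ties them together. *)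
Lemma chain_vanishing j0 : W j0 = 0 -> G (j0 - 1) + G (j0 + 1) = 0 ->
  exists c, forall j, G j = W j * c.
Proof.
move=> W0 Gsum; exists (G (j0 + 1)) => j.
have Wp : W (j0 + 1) = 1 by rewrite W_succ W0 add0r.
have Wm : W (j0 - 1) = -1.
  by apply/eqP; rewrite -subr_eq0 opprK -W_succ subrK W0.
have G0 : G j0 = 0 by have := G_chain j0; rewrite Wp W0 mul0r mul1r.
have Gp : G (j0 + 1) = W (j0 + 1) * G (j0 + 1) by rewrite Wp mul1r.
have Gm : G (j0 - 1) = W (j0 - 1) * G (j0 + 1).
  by rewrite Wm mulN1r; apply/eqP; rewrite -addr_eq0 Gsum.
have -> : j = j0 + (j - j0) by rewrite addrC subrK.
case: (j - j0) => [[|n]|n].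
- by rewrite addr0 W0 G0 mul0r.
- have -> : j0 + n.+1%:Z = (j0 + 1) + n%:Z by lia.
  by apply: (chain_up Gp) => m; rewrite W_shift Wp nat1r pnatr_eq0.
- have -> : j0 + Negz n = (j0 - 1) - n%:Z by rewrite NegzE; lia.
  by apply: (chain_down Gm) => m; rewrite W_shiftN Wm -opprD oppr_eq0 nat1r pnatr_eq0.
Qed.
End AffineChain.

Definition weight {R : numFieldType} (a b : R) (q j : int) : R :=
  a + j%:~R + 2 * b * hz q.

Lemma weight_succ (R : numFieldType) (a b : R) q j :
  weight a b q (j + 1) = weight a b q j + 1.
Proof. by rewrite /weight; ring. Qed.

(* The coefficient identity obtained from [L_m, Y_{q+1/2}] x_j, where F q j is
   the coefficient of Y_{q+1/2} x_j. *)
Definition Y_recurrence {R : numFieldType} (a b : R) (F : int -> int -> R) :=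
  forall q j m : int,
    F q j * (a + (j%:~R + hz q) + (b + 1 / 2) * m%:~R)
    - (a + j%:~R + b * m%:~R) * F q (j + m)
    = (hz q - m%:~R / 2) * F (q + m) j.

Lemma Y_recurrence_of_module (R : numFieldType) (V : lmodType R)
    (L Y M : int -> {linear V -> V}) (x : int -> V) (a b : R) (f : int -> int -> R) :
  is_L12_module_c0 L Y M ->
  is_basis x ->
  (forall (q t : int), Y q (x t) = f q t *: x (t + (2 * q + 1))) ->
  (forall (n t : int), ~~ odd `|t|%N ->
      L n (x t) = (a + halfv t + b * n%:~R) *: x (t + 2 * n)) ->
  (forall (n t : int), odd `|t|%N ->
      L n (x t) = (a + halfv t + (b + 1 / 2) * n%:~R) *: x (t + 2 * n)) ->
  Y_recurrence a b (fun q j => f q (2 * j)).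
Proof.
move=> [_ LY _ _ _] basis Yx Lx_even Lx_odd q j m /=.
set T := 2 * (j + m) + (2 * q + 1).
have LYx : L m (Y q (x (2 * j))) =
    (f q (2 * j) * (a + (j%:~R + hz q) + (b + 1 / 2) * m%:~R)) *: x T.
  rewrite Yx linearZ /= Lx_odd; last by lia.
  by rewrite halfv_odd scalerA (_ : _ + 2 * m = T) // /T; lia.
have YLx : Y q (L m (x (2 * j))) =
    ((a + j%:~R + b * m%:~R) * f q (2 * (j + m))) *: x T.
  rewrite Lx_even; last by lia.
  by rewrite halfv_even linearZ /= Yx scalerA (_ : 2 * j + 2 * m = 2 * (j + m)) //; lia.
have Yx' : Y (q + m) (x (2 * j)) = f (q + m) (2 * j) *: x T.
  by rewrite Yx (_ : 2 * j + (2 * (q + m) + 1) = T) // /T; lia.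
have := LY m q (x (2 * j)).
rewrite LYx YLx Yx' scalerA -scalerBl => /eqP; rewrite -subr_eq0 -scalerBl.
by move=> /eqP /(basis_scale_eq0 basis) /eqP; rewrite subr_eq0 => /eqP.
Qed.

Section Recurrence.
Variables (R : numFieldType) (a b : R) (F : int -> int -> R).
Hypothesis rec : Y_recurrence a b F.

Local Notation w := (weight a b).

Lemma rec_at q j m q' j' : q' = q + m -> j' = j + m ->
  F q j * (a + (j%:~R + hz q) + (b + 1 / 2) * m%:~R)
  - (a + j%:~R + b * m%:~R) * F q j' = (hz q - m%:~R / 2) * F q' j.
Proof. by move=> -> ->; exact: rec. Qed.
Arguments rec_at : clear implicits.

(* The weight itself solves the recurrence, so proportionality to it passes
   from row q0 to row q0 + m whenever the right-hand coefficient is nonzero. *)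
Lemma weight_propagates q0 m j c : (hz q0 - m%:~R / 2 : R) != 0 ->
  F q0 j = w q0 j * c -> F q0 (j + m) = w q0 (j + m) * c ->
  F (q0 + m) j = w (q0 + m) j * c.
Proof.
move=> coef_nz Fj Fjm; apply: (mulfI coef_nz).
by rewrite -rec Fj Fjm /weight /hz; field.
Qed.

(* On row 0 with m = 1 the right-hand side vanishes: a first-order chain. *)
Lemma row0_chain j : w 0 (j + 1) * F 0 j = w 0 j * F 0 (j + 1).
Proof.
apply: (eq_by_multiple (k := 1) (rec 0 j 1)).
by rewrite /weight /hz; field.
Qed.

(* Likewise on row -1 with m = -1. *)
Lemma rowN1_chain j : w (-1) (j + 1) * F (-1) j = w (-1) j * F (-1) (j + 1).
Proof.
apply: (eq_by_multiple (k := -1) (rec_at (-1) (j + 1) (-1) (-2) j _ _)); try lia.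
by rewrite /weight /hz; field.
Qed.

(* Proportionality on row 0 gives it on every row: directly for q <> 1, and
   through row -1 for q = 1. *)
Lemma row0_spreads c : (forall j, F 0 j = w 0 j * c) ->
  forall q j, F q j = w q j * c.
Proof.
move=> row0.
have rowN1 j : F (-1) j = w (-1) j * c.
  apply: (weight_propagates (q0 := 0) (m := -1)) (row0 _) (row0 _).
  by rewrite /hz (_ : _ - _ = 1); [exact: oner_neq0 | field].
move=> q j; have [->|q_ne1] := eqVneq q 1.
  apply: (weight_propagates (q0 := -1) (m := 2)) (rowN1 _) (rowN1 _).
  rewrite /hz (_ : _ - _ = - (3 / 2)); last by field.
  by rewrite oppr_eq0 mulf_neq0 ?invr_eq0 ?pnatr_eq0.
rewrite -[q]add0r; apply: weight_propagates (row0 _) (row0 _).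
rewrite /hz (_ : _ - _ = (1 - q)%:~R / 2); last by field.
rewrite mulf_neq0 ?invr_eq0 ?pnatr_eq0 // intr_eq0; lia.
Qed.

Lemma rowN1_to_row0 c : (forall j, F (-1) j = w (-1) j * c) ->
  forall j, F 0 j = w 0 j * c.
Proof.
move=> rowN1 j.
apply: (weight_propagates (q0 := -1) (m := 1)) (rowN1 _) (rowN1 _).
by rewrite /hz (_ : _ - _ = -1); [rewrite oppr_eq0 oner_eq0 | field].
Qed.

(* The chain on row 0
   gives F 0 j0 = 0 and F 0 (j0-2) = 2 F 0 (j0-1); the recurrence then
   expresses F (-1) (j0 -+ 1) through row 0, and F (-3) (j0+1) in two ways,
   from row 0 and from row -1.  The two expressions differ by
   (3t^2 - t - 1) (F 0 (j0-1) + F 0 (j0+1)), which therefore vanishes. *)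
Lemma degenerate_row0 j0 (t : int) : w 0 j0 = 0 -> 2 * b = t%:~R ->
  F 0 (j0 - 1) + F 0 (j0 + 1) = 0.
Proof.
move=> w0 two_b.
have a_val : a = - j0%:~R - b.
  by apply/eqP; rewrite -subr_eq0 -w0 /weight /hz; apply/eqP; field.
set P := F 0 (j0 + 1); set Q := F 0 (j0 - 1).
have F0 : F 0 j0 = 0.
  by have := row0_chain j0; rewrite weight_succ w0 add0r mul1r mul0r.
have F0m2 : F 0 (j0 - 2) = 2 * Q.
  have := row0_chain (j0 - 2); rewrite (_ : j0 - 2 + 1 = j0 - 1); last by lia.
  move=> chain; apply: (eq_by_multiple (k := -1) chain).
  by rewrite /weight /hz a_val /Q; field.
have FN1p : F (-1) (j0 + 1) = (1 - 2 * b) * P.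
  apply: (eq_by_multiple (k := -1)
    (rec_at 0 (j0 + 1) (-1) (-1) j0 _ _)); try lia.
  by rewrite F0 /hz a_val /P; field.
have FN1m : F (-1) (j0 - 1) = (1 + 2 * b) * Q.
  apply: (eq_by_multiple (k := -1)
    (rec_at 0 (j0 - 1) (-1) (-1) (j0 - 2) _ _)); try lia.
  by rewrite F0m2 /hz a_val /Q; field.
have FN3_row0 : F (-3) (j0 + 1) = - 2 * b * P - (1 - 4 * b) * Q.
  apply: (eq_by_multiple (k := - (1 / 2))
    (rec_at 0 (j0 + 1) (-3) (-3) (j0 - 2) _ _)); try lia.
  by rewrite F0m2 /hz a_val /P /Q; field.
have FN3_rowN1 : F (-3) (j0 + 1) =
    - (1 + 6 * b) * (1 - 2 * b) * P - 2 * (1 - 3 * b) * (1 + 2 * b) * Q.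
  apply: (eq_by_multiple (k := -2)
    (rec_at (-1) (j0 + 1) (-2) (-3) (j0 - 1) _ _)); try lia.
  by rewrite FN1p FN1m /hz a_val /P /Q; field.
have quad_nz : 3 * (2 * b) * (2 * b) - 2 * b - 1 != 0.
  have := no_integral_root t; rewrite -(intr_eq0 R) !rmorphB !rmorphM /=.
  by rewrite two_b.
apply: (mulfI quad_nz); rewrite mulr0.
apply: (eq_by_multiple (k := -1) (etrans (esym FN3_row0) FN3_rowN1)).
by rewrite /P /Q; field.
Qed.

Lemma proportional_to_weight : exists c, forall q j, F q j = w q j * c.
Proof.
have [[j0 w0]|w0_nz] := classic (exists j0, w 0 j0 = 0); last first.
  have w0_ne j : w 0 j != 0 by apply/eqP => w0; apply: w0_nz; exists j.
  have [c Fc] := chain_nonvanishing row0_chain w0_ne.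
  by exists c; apply: row0_spreads.
have [[j1 w1]|w1_nz] := classic (exists j1, w (-1) j1 = 0); last first.
  have w1_ne j : w (-1) j != 0 by apply/eqP => w1; apply: w1_nz; exists j.
  have [c Fc] := chain_nonvanishing rowN1_chain w1_ne.
  by exists c; apply/row0_spreads/rowN1_to_row0.
have two_b : 2 * b = (j1 - j0)%:~R.
  apply: (eq_by_multiple (k := 1) (etrans w0 (esym w1))).
  by rewrite /weight /hz; field.
have [c Fc] := chain_vanishing (weight_succ a b 0) row0_chain w0
  (degenerate_row0 w0 two_b).
by exists c; apply: row0_spreads.
Qed.
End Recurrence.

Theorem lemma3p3 (R : numClosedFieldType) (V : lmodType R)
  (L : int -> {linear V -> V}) (Y : int -> {linear V -> V})
  (M : int -> {linear V -> V}) (x : int -> V)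
  (a b : R) (f : int -> int -> R) (g : int -> int -> R) :
  is_L12_module_c0 L Y M ->
  is_basis x ->
  (forall (q t : int), Y q (x t) = f q t *: x (t + (2 * q + 1))) ->
  (forall (n t : int), M n (x t) = g n t *: x (t + 2 * n)) ->
  (forall (n t : int), ~~ odd `|t|%N ->
      L n (x t) = (a + halfv t + b * n%:~R) *: x (t + 2 * n)) ->
  (forall (n t : int), odd `|t|%N ->
      L n (x t) = (a + halfv t + (b + 1 / 2) * n%:~R) *: x (t + 2 * n)) ->
  (forall (k j qn qp : int),
      (a + k%:~R + 2 * b * hz qn) * f qp (2 * j)
      = (a + j%:~R + 2 * b * hz qp) * f qn (2 * k))
  /\ (exists f0 : R, forall (j qp : int),
      f qp (2 * j) = (a + j%:~R + 2 * b * hz qp) * f0).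
Proof.
move=> module basis Yx _ Lx_even Lx_odd.
have [c Fc] := proportional_to_weight
  (Y_recurrence_of_module module basis Yx Lx_even Lx_odd).
have fc q j : f q (2 * j) = weight a b q j * c := Fc q j.
split; last by exists c.
by move=> k j qn qp; rewrite !fc /weight mulrCA.
Qed.
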